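(* Let $\nu>0$, $\beta$ a constant, $K$ a smooth positive function with antiderivative $J(u)=\int K(u)\,du$ assumed invertible, and $C(u)=\beta K(u)$. For arbitrary constants $c_1,c_2$ define, for $z>0$, $t>0$, $$v(z,t)=\begin{cases} t^{-(1+\nu)/2}\exp\!\left(-\frac{\beta z^2}{4t}\right)\left(c_1+c_2\frac{(z/t)^{1-\nu}}{1-\nu}\right), & \nu\neq 1,\\[4pt] t^{-1}\exp\!\left(-\frac{\beta z^2}{4t}\right)\left(c_1+c_2\ln\frac{z}{t}\right), & \nu=1.\end{cases}$$ Then $v$ solves $\beta v_t=v_{zz}+\frac{\nu}{z}v_z$, and, wherever $v$ takes values in the range of $J$, $u(z,t)=J^{-1}(v(z,t))$ solves $C(u)u_t=z^{-\nu}\left(K(u)z^{\nu}u_z\right)_z$. *)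

From Stdlib Require Import Reals.
From Coquelicot Require Import Coquelicot.
Open Scope R_scope.

Definition vsol (beta nu c1 c2 : R) (z t : R) : R :=
  if Req_EM_T nu 1 then
    / t * exp (- (beta * z ^ 2) / (4 * t)) * (c1 + c2 * ln (z / t))
  else
    Rpower t (- (1 + nu) / 2) * exp (- (beta * z ^ 2) / (4 * t))
      * (c1 + c2 * (Rpower (z / t) (1 - nu) / (1 - nu))).

From Stdlib Require Import Reals Lra Ranalysis5.
From Coquelicot Require Import Coquelicot.
Open Scope R_scope.

(** The Kirchhoff transformation [v = J u], with [J' = K], turns
    [C(u) u_t = z^-nu (K(u) z^nu u_z)_z] into the linear radial heat equation
    [beta v_t = v_zz + (nu/z) v_z]: indeed [K(u) u_t = v_t] and the flux
    [K(u) z^nu u_z] is [z^nu v_z].  Since [K > 0], [J] is a strictly increasing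
    bijection onto its (open) range, so [J^-1] is differentiable there.
    The linear equation has the similarity solutions
    [t^(-(1+nu)/2) exp(-beta z^2/(4t)) S(z/t)], which solve it as soon as
    [x S'' + nu S' = 0], i.e. [S' = c2 x^-nu]; the two branches of [vsol] are
    the two forms of [S = c1 + c2 * integral x^-nu]. *)

Definition radial_heat_solution (beta nu : R) (v : R -> R -> R) : Prop :=
  exists vt vz vzz : R -> R -> R, forall z t, 0 < z -> 0 < t ->
    is_derive (fun s => v z s) t (vt z t) /\
    is_derive (fun y => v y t) z (vz z t) /\
    is_derive (fun y => vz y t) z (vzz z t) /\
    beta * vt z t = vzz z t + nu / z * vz z t.

Lemma radial_heat_solution_ext beta nu (v w : R -> R -> R) :
  (forall z t, 0 < z -> 0 < t -> v z t = w z t) ->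
  radial_heat_solution beta nu v -> radial_heat_solution beta nu w.
Proof.
  intros vw [vt [vz [vzz Hv]]].
  exists vt, vz, vzz. intros z t Hz Ht.
  destruct (Hv z t Hz Ht) as (dvt & dvz & dvzz & heat).
  split; [|split; [|split]]; try assumption.
  - apply (is_derive_ext_loc (fun s => v z s)); [|assumption].
    apply (filter_imp (fun s => 0 < s)); [|exact (open_gt 0 t Ht)].
    intros s Hs. apply vw; assumption.
  - apply (is_derive_ext_loc (fun y => v y t)); [|assumption].
    apply (filter_imp (fun y => 0 < y)); [|exact (open_gt 0 z Hz)].
    intros y Hy. apply vw; assumption.
Qed.

Lemma radial_heat_solution_Derive beta nu v :
  radial_heat_solution beta nu v ->
  forall z t, 0 < z -> 0 < t ->
     exists vt vz vzz,
       is_derive (fun s => v z s) t vt /\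
       is_derive (fun y => v y t) z vz /\
       is_derive (fun y => Derive (fun w => v w t) y) z vzz /\
       beta * vt = vzz + nu / z * vz.
Proof.
  intros [vt [vz [vzz Hv]]] z t Hz Ht.
  destruct (Hv z t Hz Ht) as (dvt & dvz & dvzz & heat).
  exists (vt z t), (vz z t), (vzz z t).
  split; [|split; [|split]]; try assumption.
  apply (is_derive_ext_loc (fun y => vz y t)); [|assumption].
  apply (filter_imp (fun y => 0 < y)); [|exact (open_gt 0 z Hz)].
  intros y Hy. symmetry. apply is_derive_unique, (Hv y t Hy Ht).
Qed.

Definition similarity_solution (beta nu : R) (S : R -> R) (z t : R) : R :=
  Rpower t (- (1 + nu) / 2) * exp (- (beta * z ^ 2) / (4 * t)) * S (z / t).

Lemma radial_heat_similarity_solution (beta nu : R) (S S' S'' : R -> R) :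
  (forall x, 0 < x -> is_derive S x (S' x)) ->
  (forall x, 0 < x -> is_derive S' x (S'' x)) ->
  (forall x, 0 < x -> x * S'' x + nu * S' x = 0) ->
  radial_heat_solution beta nu (similarity_solution beta nu S).
Proof.
  intros dS dS' profile.
  set (g z t := Rpower t (- (1 + nu) / 2) * exp (- (beta * z ^ 2) / (4 * t))).
  exists (fun z t => g z t * ((- (1 + nu) / (2 * t) + beta * z ^ 2 / (4 * t ^ 2)) * S (z / t)
                              - z / t ^ 2 * S' (z / t))),
         (fun z t => g z t * (- (beta * z) / (2 * t) * S (z / t) + S' (z / t) / t)),
         (fun z t => g z t * ((beta ^ 2 * z ^ 2 / (4 * t ^ 2) - beta / (2 * t)) * S (z / t)
                              - beta * z / t ^ 2 * S' (z / t) + S'' (z / t) / t ^ 2)).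
  intros z t Hz Ht.
  assert (Hx : 0 < z / t) by (apply Rdiv_lt_0_compat; assumption).
  assert (DS : Derive (fun x => S x) (z / t) = S' (z / t))
    by exact (is_derive_unique _ _ _ (dS _ Hx)).
  assert (DS' : Derive (fun x => S' x) (z / t) = S'' (z / t))
    by exact (is_derive_unique _ _ _ (dS' _ Hx)).
  pose proof (profile _ Hx) as profile_zt.
  unfold similarity_solution, g, Rpower, Rdiv in *.
  split; [|split; [|split]].
  - auto_derive.
    + repeat split; try lra. exists (S' (z * / t)). apply dS. assumption.
    + rewrite DS. cbn [pow]. field. lra.
  - auto_derive.
    + repeat split; try lra. exists (S' (z * / t)). apply dS. assumption.
    + rewrite DS. cbn [pow]. field. lra.
  - auto_derive.
    + repeat split; try lra; eexists; [apply dS | apply dS']; assumption.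
    + rewrite DS, DS'. cbn [pow]. field. lra.
  - replace (S'' (z * / t)) with (z * / t * S'' (z * / t) / (z * / t)) by (field; lra).
    replace (z * / t * S'' (z * / t)) with (- (nu * S' (z * / t))) by lra.
    field. lra.
Qed.

Lemma radial_heat_vsol beta nu c1 c2 :
  radial_heat_solution beta nu (vsol beta nu c1 c2).
Proof.
  unfold vsol. destruct (Req_EM_T nu 1) as [-> | nu_ne1].
  - apply radial_heat_solution_ext
      with (similarity_solution beta 1 (fun x => c1 + c2 * ln x)).
    + intros z t Hz Ht. unfold similarity_solution.
      replace (- (1 + 1) / 2) with (- (1)) by field.
      rewrite Rpower_Ropp, Rpower_1 by assumption. reflexivity.
    + apply radial_heat_similarity_solution
        with (fun x => c2 / x) (fun x => - (c2 / x ^ 2)); intros x Hx.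
      * auto_derive; [lra | field; lra].
      * auto_derive; [lra | field; lra].
      * field. lra.
  - assert (1 - nu <> 0) by lra.
    change (radial_heat_solution beta nu
      (similarity_solution beta nu (fun x => c1 + c2 * (Rpower x (1 - nu) / (1 - nu))))).
    apply radial_heat_similarity_solution
      with (fun x => c2 * Rpower x (- nu)) (fun x => - nu * (c2 * Rpower x (- nu)) / x);
      intros x Hx; unfold Rpower.
    + auto_derive; [lra |].
      replace ((1 - nu) * ln x) with (- nu * ln x + ln x) by ring.
      rewrite exp_plus, exp_ln by assumption. field. split; lra.
    + auto_derive; [lra | field; lra].
    + field. lra.
Qed.

Section Kirchhoff.

Variables K J Jinv : R -> R.
Hypothesis K_pos : forall x, 0 < K x.
Hypothesis J_derive : forall x, is_derive J x (K x).
Hypothesis JinvK : forall x, Jinv (J x) = x.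

Lemma J_increasing x y : x < y -> J x < J y.
Proof.
  intros Hxy.
  apply (incr_function J m_infty p_infty K); simpl; auto.
  intros; apply K_pos.
Qed.

Lemma J_continuous : continuity J.
Proof.
  intros x. apply derivable_continuous_pt.
  exists (K x). apply is_derive_Reals, J_derive.
Qed.

Lemma J_onto_bracket w y :
  J (w - 1) <= y <= J (w + 1) -> exists x, w - 1 <= x <= w + 1 /\ J x = y.
Proof.
  intros Hy.
  assert (J (w - 1) < J (w + 1)) by (apply J_increasing; lra).
  destruct (IVT_gen J (w - 1) (w + 1) y J_continuous) as [x [Hx Jx]].
  - rewrite Rmin_left, Rmax_right; lra.
  - rewrite Rmin_left, Rmax_right in Hx by lra. exists x. auto.
Qed.

Lemma J_range_nbhs w : locally (J w) (fun y => exists x, J x = y).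
Proof.
  assert (J (w - 1) < J w < J (w + 1)) by (split; apply J_increasing; lra).
  apply (filter_imp (fun y => J (w - 1) < y < J (w + 1))).
  - intros y Hy. destruct (J_onto_bracket w y) as [x [_ Jx]]; [lra | eauto].
  - apply (open_and _ _ (open_gt _) (open_lt _)). assumption.
Qed.

Lemma is_derive_Jinv w : is_derive Jinv (J w) (/ K w).
Proof.
  assert (J (w - 1) < J w < J (w + 1)) by (split; apply J_increasing; lra).
  assert (JJinv : forall y, J (w - 1) <= y <= J (w + 1) -> comp J Jinv y = id y).
  { intros y Hy. destruct (J_onto_bracket w y Hy) as [x [_ <-]].
    unfold comp, id. rewrite JinvK. reflexivity. }
  assert (Jinv_cont : continuity_pt Jinv (J w)).
  { apply (continuity_pt_recip_interv J Jinv (w - 1) (w + 1)); try lra.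
    - intros; apply J_increasing; lra.
    - intros y Hy1 Hy2. apply JJinv. lra.
    - intros y Hy1 Hy2. destruct (J_onto_bracket w y) as [x [Hx <-]]; [lra |].
      rewrite JinvK. assumption.
    - intros; apply J_continuous. }
  pose (J_derivable a (_ : Jinv (J (w - 1)) <= a <= Jinv (J (w + 1))) :=
    exist (fun l => derivable_pt_lim J a l) (K a)
      (proj1 (is_derive_Reals _ _ _) (J_derive a)) : derivable_pt J a).
  assert (Hw : Jinv (J (w - 1)) <= Jinv (J w) <= Jinv (J (w + 1))).
  { rewrite !JinvK. lra. }
  pose proof (K_pos w).
  apply is_derive_Reals.
  replace (/ K w) with (1 / derive_pt J (Jinv (J w)) (J_derivable _ Hw))
    by (simpl; rewrite JinvK; field; lra).
  apply (derivable_pt_lim_recip_interv J Jinv); try lra.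
  - exact Jinv_cont.
  - intros y Hy. apply JJinv. lra.
  - simpl. rewrite JinvK. lra.
Qed.

Lemma is_derive_Jinv_comp (f : R -> R) x w l :
  J w = f x -> is_derive f x l -> is_derive (fun y => Jinv (f y)) x (l / K w).
Proof.
  intros Jw df.
  unfold Rdiv.
  apply (is_derive_comp Jinv f); [rewrite <- Jw; apply is_derive_Jinv | exact df].
Qed.

Lemma Kirchhoff_flux_near (f f' : R -> R) z w :
  J w = f z -> locally z (fun y => is_derive f y (f' y)) ->
  locally z (fun y => K (Jinv (f y)) * Derive (fun x => Jinv (f x)) y = f' y).
Proof.
  intros Jw df.
  assert (in_range : locally z (fun y => exists x, J x = f y)).
  { pose proof (ex_derive_continuous f z
      (ex_intro (is_derive f z) (f' z) (locally_singleton _ _ df))) as f_cont.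
    apply (f_cont (fun y => exists x, J x = y)).
    rewrite <- Jw. apply J_range_nbhs. }
  generalize (filter_and _ _ in_range df).
  apply filter_imp. intros y [[x Jx] dfy].
  replace (Derive (fun x => Jinv (f x)) y) with (f' y / K x)
    by (symmetry; apply is_derive_unique, is_derive_Jinv_comp; assumption).
  rewrite <- Jx, JinvK. field. apply Rgt_not_eq, K_pos.
Qed.

Lemma Kirchhoff_transform beta nu v :
  radial_heat_solution beta nu v ->
  forall z t, 0 < z -> 0 < t ->
     (exists w, J w = v z t) ->
     let u := fun y s => Jinv (v y s) in
     exists ut flux_z,
       is_derive (fun s => u z s) t ut /\
       ex_derive (fun y => u y t) z /\
       is_derive (fun y => K (u y t) * Rpower y nu * Derive (fun w => u w t) y) z flux_z /\
       (beta * K (u z t)) * ut = Rpower z (- nu) * flux_z.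
Proof.
  intros [vt [vz [vzz Hv]]] z t Hz Ht [w Jw] u. unfold u.
  destruct (Hv z t Hz Ht) as (dvt & dvz & dvzz & heat).
  assert (dvz_near : locally z (fun y => is_derive (fun y => v y t) y (vz y t))).
  { apply (filter_imp (fun y => 0 < y)); [|exact (open_gt 0 z Hz)].
    intros y Hy. apply (Hv y t Hy Ht). }
  assert (dpow : is_derive (fun y => Rpower y nu) z (nu * Rpower z (nu - 1))).
  { apply is_derive_Reals, derivable_pt_lim_power. assumption. }
  exists (vt z t / K w), (nu * Rpower z (nu - 1) * vz z t + Rpower z nu * vzz z t).
  split; [|split; [|split]].
  - apply is_derive_Jinv_comp; assumption.
  - eexists. apply is_derive_Jinv_comp with (w := w); eassumption.
  - apply is_derive_ext_loc with (fun y => Rpower y nu * vz y t).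
    + generalize (Kirchhoff_flux_near _ _ z w Jw dvz_near).
      apply filter_imp. intros y Hy. rewrite <- Hy. simpl. ring.
    + apply (is_derive_mult (fun y => Rpower y nu) (fun y => vz y t)); auto.
      intros; apply Rmult_comm.
  - rewrite <- Jw, JinvK.
    replace (nu - 1) with (nu + - (1)) by ring.
    rewrite Rpower_plus, !Rpower_Ropp, Rpower_1 by assumption.
    assert (0 < Rpower z nu) by apply exp_pos.
    pose proof (K_pos w).
    transitivity (beta * vt z t); [field; lra |].
    rewrite heat. field. lra.
Qed.

End Kirchhoff.

Theorem mainTheorem9
  (nu beta c1 c2 : R) (K J Jinv : R -> R)
  (Hnu : 0 < nu)
  (Ksmooth : forall (n : nat) (x : R), ex_derive_n K n x)
  (Kpos : forall x, 0 < K x)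
  (HJ : forall x, is_derive J x (K x))
  (HJinv : forall x, Jinv (J x) = x) :
  (* v solves  beta v_t = v_zz + (nu/z) v_z  for z>0, t>0 *)
  (forall z t, 0 < z -> 0 < t ->
     exists vt vz vzz,
       is_derive (fun s => vsol beta nu c1 c2 z s) t vt /\
       is_derive (fun y => vsol beta nu c1 c2 y t) z vz /\
       is_derive (fun y => Derive (fun w => vsol beta nu c1 c2 w t) y) z vzz /\
       beta * vt = vzz + nu / z * vz)
  /\
  (* u = J^{-1}(v) solves  C(u) u_t = z^{-nu} (K(u) z^nu u_z)_z, C = beta K,
     wherever v takes values in the range of J *)
  (forall z t, 0 < z -> 0 < t ->
     (exists w, J w = vsol beta nu c1 c2 z t) ->
     let u := fun y s => Jinv (vsol beta nu c1 c2 y s) in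
     exists ut flux_z,
       is_derive (fun s => u z s) t ut /\
       ex_derive (fun y => u y t) z /\
       is_derive (fun y => K (u y t) * Rpower y nu * Derive (fun w => u w t) y) z flux_z /\
       (beta * K (u z t)) * ut = Rpower z (- nu) * flux_z).
Proof.
  pose proof (radial_heat_vsol beta nu c1 c2) as v_heat.
  split.
  - exact (radial_heat_solution_Derive _ _ _ v_heat).
  - exact (Kirchhoff_transform K J Jinv Kpos HJ HJinv _ _ _ v_heat).
Qed.
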